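(* Let $k\ge0$ and $l\ge1$. Then $$H^{(k)}=\sum_{\substack{0<n<b^{l-1}\\ k(n)=k}}\frac1n+b\sum_{\substack{b^{l-1}\le n<b^l\\ k(n)\le k}}\frac1n+\sum_{m=1}^\infty(-1)^m\sum_{\substack{b^{l-1}\le n<b^l\\ k(n)\le k}}\frac{u_{k-k(n);m}}{n^{m+1}},$$ and also $$H^{(k)}=\sum_{\substack{0<n<b^{l-1}\\ k(n)=k}}\frac1n+b\sum_{\substack{b^{l-1}\le n<b^l\\ k(n)\le k}}\frac1{n+1}+\sum_{m=1}^\infty\sum_{\substack{b^{l-1}\le n<b^l\\ k(n)\le k}}\frac{v_{k-k(n);m}}{(n+1)^{m+1}}.$$
   Context: Fix $b\ge2$ and $d\in\{0,\dots,b-1\}$. For an integer $n\ge0$, $k(n)$ is the number of occurrences of $d$ in its base-$b$ representation without leading zeros, and $H^{(k)}=\sum_{n\ge1,\ k(n)=k}1/n$. A string is a finite sequence $X=(d_l,\dots,d_1)$ of digits in $\{0,\dots,b-1\}$ (leading zeros allowed), of length $|X|=l\ge0$; its value is $n(X)=\sum_{i=1}^{l}d_ib^{i-1}$ ($0$ for the empty string). For $k\ge0$, $\mu_k=\sum_{X}b^{-|X|}\delta_{n(X)/b^{|X|}}$, the sum over all strings $X$ containing $d$ exactly $k$ times; it is a finite measure on $[0,1)$ of total mass $b$. Moments: $u_{k;m}=\int_{[0,1)}x^m\,d\mu_k(x)$ and $v_{k;m}=\int_{[0,1)}(1-x)^m\,d\mu_k(x)$ (with $0^0=1$). *)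

From Stdlib Require Import Reals Lra Lia Arith List.
From Coquelicot Require Import Coquelicot.
Open Scope R_scope.

Definition rsum (N : nat) (f : nat -> R) : R :=
  fold_right (fun i acc => f i + acc) 0 (List.seq 0 N).

Fixpoint cnt_len (b d : nat) (len n : nat) : nat :=
  match len with
  | O => O
  | S len' => (if Nat.eqb (n mod b) d then 1 else 0)%nat + cnt_len b d len' (n / b)
  end.

(* Recursion: k(0) = 0 (empty representation; only n >= 1 is used),
   k(n) = [n mod b = d] + k(n / b) for n >= 1.  Fuel n suffices since n/b < n. *)
Fixpoint kdig_aux (b d : nat) (fuel n : nat) : nat :=
  match fuel with
  | O => O
  | S f => if Nat.eqb n 0 then O
           else ((if Nat.eqb (n mod b) d then 1 else 0)%nat + kdig_aux b d f (n / b))%nat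
  end.
Definition kdig (b d n : nat) : nat := kdig_aux b d n n.

Definition Hterm (b d k n : nat) : R :=
  if andb (1 <=? n)%nat (Nat.eqb (kdig b d n) k) then / INR n else 0.
Definition H (b d k : nat) : R := Series (Hterm b d k).

(* Strings of length l are identified with their values x in [0, b^l) (digits
   d_l ... d_1, leading zeros allowed); the string contains d exactly
   cnt_len b d l x times.  mu_k = sum_X b^{-|X|} delta_{n(X)/b^|X|}, so
   integrals against mu_k are the corresponding weighted sums, grouped by
   string length l. *)
Definition mu_integral (b d k : nat) (g : R -> R) : R :=
  Series (fun l : nat =>
    rsum (b ^ l) (fun x => if Nat.eqb (cnt_len b d l x) k
                           then / INR (b ^ l) * g (INR x / INR (b ^ l)) else 0)).

(* u_{k;m} = int x^m dmu_k,  v_{k;m} = int (1-x)^m dmu_k  (pow: 0^0 = 1). *)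
Definition u_mom (b d k m : nat) : R := mu_integral b d k (fun x => x ^ m).
Definition v_mom (b d k m : nat) : R := mu_integral b d k (fun x => (1 - x) ^ m).

Definition low_part (b d k l : nat) : R :=
  rsum (b ^ (l - 1)) (fun n => if andb (1 <=? n)%nat (Nat.eqb (kdig b d n) k)
                               then / INR n else 0).

Definition block_sum (b d k l : nat) (f : nat -> R) : R :=
  rsum (b ^ l) (fun n => if andb (b ^ (l - 1) <=? n)%nat (kdig b d n <=? k)%nat
                         then f n else 0).

Definition tail_u (b d k l m : nat) : R :=
  (-1) ^ m * block_sum b d k l
    (fun n => u_mom b d (k - kdig b d n) m / INR n ^ (m + 1)).
Definition tail_v (b d k l m : nat) : R :=
  block_sum b d k l
    (fun n => v_mom b d (k - kdig b d n) m / INR (n + 1) ^ (m + 1)).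

From Stdlib Require Import Reals Lra Lia.
From Coquelicot Require Import Coquelicot.
Open Scope R_scope.

(* Every n >= b^(l-1) splits uniquely as n = N b^j + X with a leading block
   b^(l-1) <= N < b^l and a j-digit string X, and k(n) = k(N) + (number of d's in X).
   Since 1/n = b^-j / (N + X/b^j), the terms of H^(k) with leading block N sum to the
   integral of 1/(N+x) against mu_(k - k(N)).  Expanding 1/(N+x) geometrically in
   -x/N, resp. in (1-x)/(N+1), and integrating term by term gives the two formulas:
   mu_k has total mass b, which yields the middle sums, and the m-th remainder is at
   most x^(m+1), resp. 2^-(m+1), whose integral tends to 0 (for x^(m+1) by dominated
   convergence, as the mass of mu_k is finite and x < 1 on each layer). *)

Lemma rsum_Sl N f : rsum (S N) f = f 0%nat + rsum N (fun i => f (S i)).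
Proof.
  unfold rsum; cbn; f_equal.
  generalize 0%nat; induction N as [|N IH]; intros s; cbn; [reflexivity|].
  now rewrite IH.
Qed.

Lemma rsum_S N f : rsum (S N) f = rsum N f + f N.
Proof.
  revert f; induction N as [|N IH]; intros f; rewrite rsum_Sl.
  - unfold rsum; cbn; lra.
  - rewrite IH, rsum_Sl; lra.
Qed.

Lemma rsum_ext N f g : (forall i, (i < N)%nat -> f i = g i) -> rsum N f = rsum N g.
Proof.
  induction N as [|N IH]; intros Hfg; [reflexivity|].
  rewrite !rsum_S, IH, Hfg; [reflexivity|lia|intros; apply Hfg; lia].
Qed.

Lemma rsum_plus N f g : rsum N (fun i => f i + g i) = rsum N f + rsum N g.
Proof. induction N; [unfold rsum; cbn; lra|]. rewrite !rsum_S, IHN; lra. Qed.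

Lemma rsum_scal N c f : rsum N (fun i => c * f i) = c * rsum N f.
Proof. induction N; [unfold rsum; cbn; lra|]. rewrite !rsum_S, IHN; lra. Qed.

Lemma rsum_const N c : rsum N (fun _ => c) = INR N * c.
Proof. induction N; [unfold rsum; cbn; lra|]. rewrite rsum_S, IHN, S_INR; lra. Qed.

Lemma rsum_zero N : rsum N (fun _ => 0) = 0.
Proof. rewrite rsum_const; lra. Qed.

Lemma rsum_le N f g : (forall i, (i < N)%nat -> f i <= g i) -> rsum N f <= rsum N g.
Proof.
  induction N as [|N IH]; intros Hfg; [unfold rsum; cbn; lra|].
  rewrite !rsum_S; apply Rplus_le_compat; [apply IH; intros|]; apply Hfg; lia.
Qed.

Lemma rsum_nonneg N f : (forall i, (i < N)%nat -> 0 <= f i) -> 0 <= rsum N f.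
Proof. intros Hf; rewrite <- (rsum_zero N); now apply rsum_le. Qed.

Lemma rsum_abs N f : Rabs (rsum N f) <= rsum N (fun i => Rabs (f i)).
Proof.
  induction N; [unfold rsum; cbn; rewrite Rabs_R0; lra|].
  rewrite !rsum_S; eapply Rle_trans; [apply Rabs_triang|lra].
Qed.

Lemma rsum_add a c f : rsum (a + c) f = rsum a f + rsum c (fun i => f (a + i)%nat).
Proof.
  induction c; [rewrite Nat.add_0_r; unfold rsum at 3; cbn; lra|].
  rewrite Nat.add_succ_r, !rsum_S, IHc; lra.
Qed.

Lemma rsum_mul a c f :
  rsum (a * c) f = rsum a (fun q => rsum c (fun r => f (q * c + r)%nat)).
Proof.
  induction a as [|a IH]; [reflexivity|].
  rewrite rsum_S, <- IH, Nat.mul_succ_l, rsum_add; reflexivity.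
Qed.

Lemma rsum_swap A B f :
  rsum A (fun i => rsum B (fun j => f i j)) = rsum B (fun j => rsum A (fun i => f i j)).
Proof.
  induction A as [|A IH].
  - unfold rsum at 1; cbn; symmetry; exact (rsum_zero B).
  - rewrite rsum_S, IH, <- rsum_plus; apply rsum_ext; intros; now rewrite rsum_S.
Qed.

Lemma rsum_split a M f : (a <= M)%nat ->
  rsum M f = rsum a f + rsum M (fun n => if (a <=? n)%nat then f n else 0).
Proof.
  intros HaM; replace M with (a + (M - a))%nat at 1 2 by lia.
  rewrite !rsum_add, (rsum_ext a (fun n => if (a <=? n)%nat then f n else 0) (fun _ => 0)).
  - rewrite rsum_zero, Rplus_0_l; apply Rplus_eq_compat_l, rsum_ext; intros i _.
    now replace (a <=? a + i)%nat with true by (symmetry; apply Nat.leb_le; lia).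
  - intros i Hi; now replace (a <=? i)%nat with false by (symmetry; apply Nat.leb_gt; lia).
Qed.

Lemma is_series_rsum_partial (a : nat -> R) L :
  is_series a L <-> is_lim_seq (fun n => rsum n a) L.
Proof.
  assert (E : forall n, sum_n a n = rsum (S n) a).
  { induction n; [rewrite sum_O; unfold rsum; cbn; lra|].
    rewrite sum_Sn, IHn, (rsum_S (S n)); reflexivity. }
  split; intros H.
  - apply is_lim_seq_incr_1, (is_lim_seq_ext (sum_n a)); auto.
  - apply is_lim_seq_incr_1, (is_lim_seq_ext _ (sum_n a)) in H; auto.
Qed.

Lemma is_series_zero : is_series (fun _ : nat => 0) 0.
Proof.
  apply is_series_rsum_partial, (is_lim_seq_ext (fun _ => 0)); [|apply is_lim_seq_const].
  intros; symmetry; apply rsum_zero.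
Qed.

Lemma is_lim_seq_rsum A (f : nat -> nat -> R) (L : nat -> R) :
  (forall i, (i < A)%nat -> is_lim_seq (fun J => f J i) (L i)) ->
  is_lim_seq (fun J => rsum A (f J)) (rsum A L).
Proof.
  induction A as [|A IH]; intros Hf; [apply is_lim_seq_const|].
  rewrite rsum_S; apply (is_lim_seq_ext (fun J => rsum A (f J) + f J A)).
  - intros; now rewrite rsum_S.
  - apply is_lim_seq_plus'; [apply IH; intros|]; apply Hf; lia.
Qed.

Lemma is_series_rsum A (f : nat -> nat -> R) (L : nat -> R) :
  (forall i, (i < A)%nat -> is_series (fun m => f m i) (L i)) ->
  is_series (fun m => rsum A (f m)) (rsum A L).
Proof.
  intros Hf; apply is_series_rsum_partial.
  apply (is_lim_seq_ext (fun n => rsum A (fun i => rsum n (fun m => f m i)))).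
  - intros n; apply rsum_swap.
  - apply is_lim_seq_rsum; intros i Hi; now apply is_series_rsum_partial, Hf.
Qed.

Lemma rsum_le_Series (a : nat -> R) K :
  (forall n, 0 <= a n) -> ex_series a -> rsum K a <= Series a.
Proof.
  intros Ha Hex; apply (is_lim_seq_incr_compare (fun n => rsum n a)).
  - now apply is_series_rsum_partial, Series_correct.
  - intros n; rewrite rsum_S; specialize (Ha n); lra.
Qed.

Lemma Series_le_of_rsum (a : nat -> R) C :
  ex_series a -> (forall K, rsum K a <= C) -> Series a <= C.
Proof.
  intros Hex Hle; apply Series_correct, is_series_rsum_partial in Hex.
  exact (is_lim_seq_le _ _ _ _ Hle Hex (is_lim_seq_const C)).
Qed.

Lemma Series_le_tail (a m : nat -> R) L :
  (forall n, 0 <= a n <= m n) -> ex_series a -> ex_series m ->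
  Series a <= rsum L a + (Series m - rsum L m).
Proof.
  intros Ham Ha Hm; apply Series_le_of_rsum; auto; intros K.
  assert (HKL : rsum K a <= rsum (K + L) a).
  { rewrite rsum_add; enough (0 <= rsum L (fun i => a (K + i)%nat)) by lra.
    apply rsum_nonneg; intros; apply Ham. }
  assert (Hm_tail : rsum (L + K) m <= Series m)
    by (apply rsum_le_Series; auto; intros n; specialize (Ham n); lra).
  assert (Htail : rsum K (fun i => a (L + i)%nat) <= rsum K (fun i => m (L + i)%nat))
    by (apply rsum_le; intros; apply Ham).
  rewrite Nat.add_comm, rsum_add in HKL; rewrite rsum_add in Hm_tail; lra.
Qed.

(* Tannery's theorem, in the special case of a vanishing pointwise limit. *)
Lemma is_lim_seq_Series_dominated (a : nat -> nat -> R) (m : nat -> R) :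
  (forall M n, 0 <= a M n <= m n) -> ex_series m ->
  (forall n, is_lim_seq (fun M => a M n) 0) ->
  is_lim_seq (fun M => Series (a M)) 0.
Proof.
  intros Ham Hm Hlim.
  assert (Ha : forall M, ex_series (a M)).
  { intros M; apply (@ex_series_le R_AbsRing R_CompleteNormedModule _ m); auto; intros n.
    specialize (Ham M n); rewrite Rabs_pos_eq; lra. }
  assert (Hms := Series_correct _ Hm); apply is_series_rsum_partial, is_lim_seq_spec in Hms.
  apply is_lim_seq_spec; intros eps.
  destruct (Hms (pos_div_2 eps)) as [L HL]; specialize (HL L (le_n L)).
  assert (Hhead : is_lim_seq (fun M => rsum L (a M)) 0).
  { rewrite <- (rsum_zero L); apply is_lim_seq_rsum; auto. }
  apply is_lim_seq_spec in Hhead; destruct (Hhead (pos_div_2 eps)) as [N HN].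
  exists N; intros M HM; specialize (HN M HM); cbn in HL, HN.
  pose proof (Series_le_tail (a M) m L (Ham M) (Ha M) Hm) as Htail.
  assert (0 <= Series (a M))
    by (apply (Rle_trans _ (rsum 0 (a M)));
        [unfold rsum; cbn; lra|apply rsum_le_Series; auto; intros; apply Ham]).
  apply Rabs_def2 in HL; apply Rabs_def2 in HN; apply Rabs_def1; lra.
Qed.

Lemma is_lim_seq_incr_subseq (u : nat -> R) (phi : nat -> nat) (L : R) :
  (forall n, u n <= u (S n)) -> (forall n, (phi n < phi (S n))%nat) ->
  is_lim_seq (fun n => u (phi n)) L -> is_lim_seq u L.
Proof.
  intros Hu Hphi HL.
  assert (Hmono : forall m n, (m <= n)%nat -> u m <= u n).
  { intros m n Hmn; induction Hmn as [|n Hmn IH]; [lra|specialize (Hu n); lra]. }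
  assert (Hid : forall n, (n <= phi n)%nat).
  { induction n; [lia|specialize (Hphi n); lia]. }
  assert (Hbound : forall n, u n <= L).
  { intros n; apply (Rle_trans _ (u (phi n))); [apply Hmono, Hid|].
    apply (is_lim_seq_incr_compare (fun n => u (phi n))); auto.
    intros j; apply Hmono; specialize (Hphi j); lia. }
  destruct (ex_finite_lim_seq_incr u L Hu Hbound) as [T HT].
  pose proof (is_lim_seq_subseq u T phi (eventually_subseq phi Hphi) HT) as HT'.
  apply is_lim_seq_unique in HL, HT'; rewrite HL in HT'; now injection HT' as ->.
Qed.

Lemma rsum_geom_tail (y c : R) K : c <> 0 -> c - y <> 0 ->
  rsum K (fun m => y ^ S m / c ^ (S m + 1)) = / (c - y) - / c - (y / c) ^ S K / (c - y).
Proof.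
  intros Hc Hcy; induction K as [|K IH]; [unfold rsum; cbn; field; auto|].
  rewrite rsum_S, IH; unfold Rdiv; rewrite !Rpow_mult_distr, !pow_inv, Nat.add_1_r.
  assert (c ^ K <> 0) by (apply pow_nonzero; auto).
  cbn; field; auto.
Qed.

Lemma pow_unit_interval x n : 0 <= x <= 1 -> 0 <= x ^ n <= 1.
Proof. intros Hx; split; [now apply pow_le|rewrite <- (pow1 n); apply pow_incr; lra]. Qed.

Lemma rsum_geom_err (y c r : R) K : c <> 0 -> 1 <= c - y -> Rabs (y / c) <= r ->
  Rabs (rsum K (fun m => y ^ S m / c ^ (S m + 1)) - (/ (c - y) - / c)) <= r ^ S K.
Proof.
  intros Hc Hcy Hr; rewrite rsum_geom_tail by lra.
  replace (/ (c - y) - / c - (y / c) ^ S K / (c - y) - (/ (c - y) - / c))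
    with (- ((y / c) ^ S K * / (c - y))) by (unfold Rdiv; ring).
  rewrite Rabs_Ropp, Rabs_mult, <- RPow_abs, Rabs_inv, (Rabs_pos_eq (c - y)) by lra.
  assert (Hpow : Rabs (y / c) ^ S K <= r ^ S K) by (apply pow_incr; split; [apply Rabs_pos|auto]).
  assert (Hinv : 0 < / (c - y) <= 1)
    by (split; [apply Rinv_0_lt_compat; lra|rewrite <- Rinv_1; apply Rinv_le_contravar; lra]).
  pose proof (pow_le _ (S K) (Rabs_pos (y / c))); nra.
Qed.

Section Digits.

Variables b d : nat.
Hypothesis Hb : (2 <= b)%nat.

Lemma mul_add_mod q r : (r < b)%nat -> ((q * b + r) mod b = r)%nat.
Proof. intros Hr; rewrite Nat.add_comm, Nat.Div0.mod_add; now apply Nat.mod_small. Qed.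

Lemma mul_add_div q r : (r < b)%nat -> ((q * b + r) / b = q)%nat.
Proof. intros Hr; rewrite Nat.div_add_l, Nat.div_small; lia. Qed.

Lemma kdig_aux_fuel f1 f2 n : (n <= f1)%nat -> (n <= f2)%nat ->
  kdig_aux b d f1 n = kdig_aux b d f2 n.
Proof.
  revert f2 n; induction f1 as [|f1 IH]; intros [|f2] n H1 H2; cbn;
    try (replace n with 0%nat by lia; reflexivity).
  destruct (Nat.eqb_spec n 0); [reflexivity|].
  assert (n / b < n)%nat by (apply Nat.div_lt; lia).
  rewrite (IH f2); lia.
Qed.

Lemma kdig_mul_add q r : (1 <= q)%nat -> (r < b)%nat ->
  kdig b d (q * b + r) = ((if Nat.eqb r d then 1 else 0) + kdig b d q)%nat.
Proof.
  intros Hq Hr; unfold kdig at 1.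
  destruct (q * b + r)%nat as [|n] eqn:E; [lia|]; cbn [kdig_aux Nat.eqb].
  rewrite <- E, mul_add_mod, mul_add_div; auto.
  f_equal; apply kdig_aux_fuel; nia.
Qed.

Lemma cnt_len_mul_add l q r : (r < b)%nat ->
  cnt_len b d (S l) (q * b + r) = ((if Nat.eqb r d then 1 else 0) + cnt_len b d l q)%nat.
Proof. intros Hr; cbn [cnt_len]; now rewrite mul_add_mod, mul_add_div. Qed.

Lemma kdig_concat j N X : (1 <= N)%nat -> (X < b ^ j)%nat ->
  kdig b d (N * b ^ j + X) = (kdig b d N + cnt_len b d j X)%nat.
Proof.
  revert X; induction j as [|j IH]; intros X HN HX.
  - cbn in HX; replace X with 0%nat by lia.
    rewrite Nat.pow_0_r, Nat.mul_1_r, !Nat.add_0_r; reflexivity.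
  - assert (Hr : (X mod b < b)%nat) by (apply Nat.mod_upper_bound; lia).
    assert (HX' : (X / b < b ^ j)%nat) by (apply Nat.Div0.div_lt_upper_bound; cbn in HX; lia).
    pose proof (Nat.div_mod X b ltac:(lia)) as EX.
    replace (N * b ^ S j + X)%nat with ((N * b ^ j + X / b) * b + X mod b)%nat
      by (rewrite Nat.pow_succ_r'; nia).
    rewrite kdig_mul_add, IH by (auto; nia).
    cbn [cnt_len]; lia.
Qed.

End Digits.

Lemma rsum_eqb_point n d (a c : R) : (d < n)%nat ->
  rsum n (fun r => if Nat.eqb r d then a else c) = a + (INR n - 1) * c.
Proof.
  induction n as [|n IH]; intros Hd; [lia|]; rewrite rsum_S, S_INR.
  destruct (Nat.eqb_spec n d) as [->|Hnd].
  - rewrite (rsum_ext _ _ (fun _ => c)), rsum_const; [lra|].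
    intros i Hi; destruct (Nat.eqb_spec i d); [lia|reflexivity].
  - rewrite IH by lia; lra.
Qed.

Definition mu_layer (b d k : nat) (g : R -> R) (l : nat) : R :=
  rsum (b ^ l) (fun x => if Nat.eqb (cnt_len b d l x) k
                         then / INR (b ^ l) * g (INR x / INR (b ^ l)) else 0).

Section Measures.

Variables b d : nat.
Hypothesis Hb : (2 <= b)%nat.

Local Notation layer k g := (mu_layer b d k g).
Local Notation mass k := (mu_layer b d k (fun _ => 1)).

Lemma INR_pow_pos l : 0 < INR (b ^ l).
Proof. apply lt_0_INR, Nat.neq_0_lt_0, Nat.pow_nonzero; lia. Qed.

Lemma INR_base_ge_2 : 2 <= INR b.
Proof. now apply (le_INR 2). Qed.

Lemma string_value_range l x : (x < b ^ l)%nat -> 0 <= INR x / INR (b ^ l) < 1.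
Proof.
  intros Hx; pose proof (INR_pow_pos l) as Hpos; apply lt_INR in Hx.
  split; [apply Rdiv_le_0_compat; [apply pos_INR|lra]|exact (proj1 (Rdiv_lt_1 _ _ Hpos) Hx)].
Qed.

Lemma mu_layer_ext k g h l : (forall x, g x = h x) -> layer k g l = layer k h l.
Proof. intros Hgh; apply rsum_ext; intros; now rewrite Hgh. Qed.

Lemma mu_layer_plus k g h l : layer k (fun x => g x + h x) l = layer k g l + layer k h l.
Proof.
  unfold mu_layer; rewrite <- rsum_plus; apply rsum_ext; intros; destruct (_ =? _)%nat; ring.
Qed.

Lemma mu_layer_scal k c g l : layer k (fun x => c * g x) l = c * layer k g l.
Proof.
  unfold mu_layer; rewrite <- rsum_scal; apply rsum_ext; intros; destruct (_ =? _)%nat; ring.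
Qed.

Lemma mu_layer_const k c l : layer k (fun _ => c) l = c * mass k l.
Proof. rewrite <- mu_layer_scal; apply mu_layer_ext; intros; ring. Qed.

Lemma mu_layer_le k g h l : (forall x, 0 <= x <= 1 -> g x <= h x) -> layer k g l <= layer k h l.
Proof.
  intros Hgh; apply rsum_le; intros x Hx; destruct (_ =? _)%nat; [|lra].
  pose proof (INR_pow_pos l); pose proof (string_value_range l x Hx).
  apply Rmult_le_compat_l; [left; apply Rinv_0_lt_compat; lra|apply Hgh; lra].
Qed.

Lemma mu_layer_abs_le k g h l : (forall x, 0 <= x <= 1 -> Rabs (g x) <= h x) ->
  Rabs (layer k g l) <= layer k h l.
Proof.
  intros Hgh; eapply Rle_trans; [apply rsum_abs|]; apply rsum_le; intros x Hx.
  pose proof (INR_pow_pos l); pose proof (string_value_range l x Hx).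
  destruct (_ =? _)%nat; [|rewrite Rabs_R0; lra].
  rewrite Rabs_mult, Rabs_inv, (Rabs_pos_eq (INR (b ^ l))) by lra.
  apply Rmult_le_compat_l; [left; apply Rinv_0_lt_compat; lra|apply Hgh; lra].
Qed.

Lemma mass_nonneg k l : 0 <= mass k l.
Proof. rewrite <- (Rmult_0_l (mass k l)), <- mu_layer_const; apply mu_layer_le; intros; lra. Qed.

Lemma mass_0 k : mass k 0 = if Nat.eqb k 0 then 1 else 0.
Proof. unfold mu_layer; cbn; destruct k; cbn; lra. Qed.

Hypothesis Hd : (d < b)%nat.

(* A string of length [l+1] is a string [q] of length [l] followed by a digit [r];
   exactly one of the [b] digits is [d]. *)
Lemma mass_S k l :
  mass k (S l) = (INR b - 1) / INR b * mass k l
                 + / INR b * match k with O => 0 | S k' => mass k' l end.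
Proof.
  pose proof (INR_pow_pos l) as HB; pose proof INR_base_ge_2 as Hb'.
  unfold mu_layer; rewrite Nat.pow_succ_r', Nat.mul_comm, rsum_mul, mult_INR.
  set (B := INR (b ^ l)) in *; clearbody B.
  rewrite (rsum_ext _ _ (fun q =>
      (if Nat.eqb (cnt_len b d l q + 1) k then / (B * INR b) else 0)
      + (INR b - 1) * (if Nat.eqb (cnt_len b d l q) k then / (B * INR b) else 0))).
  2:{ intros q _; rewrite <- (rsum_eqb_point b d) by auto; apply rsum_ext; intros r Hr.
      rewrite cnt_len_mul_add by auto.
      destruct (Nat.eqb_spec r d); cbn; rewrite ?Nat.add_1_r, Rmult_1_r; reflexivity. }
  destruct k as [|k'].
  - rewrite Rmult_0_r, Rplus_0_r, <- rsum_scal; apply rsum_ext; intros q _.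
    destruct (Nat.eqb_spec (cnt_len b d l q + 1) 0); [lia|].
    destruct (Nat.eqb_spec (cnt_len b d l q) 0); [field; lra|ring].
  - rewrite <- !rsum_scal, <- rsum_plus; apply rsum_ext; intros q _.
    destruct (Nat.eqb_spec (cnt_len b d l q + 1) (S k'));
    destruct (Nat.eqb_spec (cnt_len b d l q) (S k'));
    destruct (Nat.eqb_spec (cnt_len b d l q) k'); try lia; field; lra.
Qed.

Lemma mass_partial_S k L :
  rsum (S L) (mass k) = match k with O => 1 | S k' => / INR b * rsum L (mass k') end
                        + (INR b - 1) / INR b * rsum L (mass k).
Proof.
  rewrite rsum_Sl, mass_0, (rsum_ext _ _ _ (fun l _ => mass_S k l)), rsum_plus, !rsum_scal.
  destruct k as [|k']; cbv beta iota; rewrite ?rsum_zero; cbn [Nat.eqb]; [ring|].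
  change (fun i => mass k' i) with (mass k'); ring.
Qed.

Lemma mass_partial_le L k : rsum L (mass k) <= INR b.
Proof.
  pose proof INR_base_ge_2 as Hb'.
  assert (Hq : forall P, P <= INR b -> (INR b - 1) / INR b * P <= INR b - 1).
  { intros P HP; apply (Rle_trans _ ((INR b - 1) / INR b * INR b)); [|right; field; lra].
    apply Rmult_le_compat_l; [apply Rdiv_le_0_compat|]; lra. }
  revert k; induction L as [|L IH]; intros k; [unfold rsum; cbn; lra|].
  rewrite mass_partial_S; specialize (Hq _ (IH k)); destruct k as [|k']; [lra|].
  assert (Hin : / INR b * rsum L (mass k') <= / INR b * INR b)
    by (apply Rmult_le_compat_l; [left; apply Rinv_0_lt_compat; lra|apply IH]).
  rewrite Rinv_l in Hin by lra; lra.
Qed.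

(* A limit T of the partial sums must satisfy T = 1 + (1 - 1/b) T, i.e. T = b. *)
Lemma mass_series_of_inflow k :
  is_lim_seq (fun L => match k with O => 1 | S k' => / INR b * rsum L (mass k') end) 1 ->
  is_series (mass k) (INR b).
Proof.
  intros Hin; pose proof INR_base_ge_2 as Hb'.
  apply is_series_rsum_partial.
  destruct (ex_finite_lim_seq_incr (fun L => rsum L (mass k)) (INR b)) as [T HT].
  - intros L; rewrite rsum_S; pose proof (mass_nonneg k L); lra.
  - intros L; apply mass_partial_le.
  - assert (HT1 : is_lim_seq (fun L => rsum (S L) (mass k)) (1 + (INR b - 1) / INR b * T)).
    { apply (is_lim_seq_ext _ _ _ (fun L => eq_sym (mass_partial_S k L))).
      apply is_lim_seq_plus'; [exact Hin|exact (is_lim_seq_scal_l _ _ T HT)]. }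
    assert (HT2 := HT); apply is_lim_seq_incr_1 in HT2.
    apply is_lim_seq_unique in HT1, HT2; rewrite HT2 in HT1; injection HT1 as HT1.
    replace (INR b) with T; [exact HT|].
    assert (T * INR b = INR b + (INR b - 1) * T) by (rewrite HT1 at 1; field; lra); nra.
Qed.

Lemma mass_series k : is_series (mass k) (INR b).
Proof.
  pose proof INR_base_ge_2 as Hb'.
  induction k as [|k IH]; apply mass_series_of_inflow; [apply is_lim_seq_const|].
  replace (Finite 1) with (Rbar_mult (/ INR b) (INR b)) by (cbn; f_equal; field; lra).
  now apply is_lim_seq_scal_l, is_series_rsum_partial.
Qed.

Lemma mu_is_plus k g h Ig Ih : is_series (layer k g) Ig -> is_series (layer k h) Ih ->
  is_series (layer k (fun x => g x + h x)) (Ig + Ih).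
Proof.
  intros Hg Hh; apply (is_series_ext _ _ _ (fun l => eq_sym (mu_layer_plus k g h l))).
  exact (is_series_plus _ _ _ _ Hg Hh).
Qed.

Lemma mu_is_scal k c g Ig : is_series (layer k g) Ig ->
  is_series (layer k (fun x => c * g x)) (c * Ig).
Proof.
  intros Hg; apply (is_series_ext _ _ _ (fun l => eq_sym (mu_layer_scal k c g l))).
  exact (is_series_scal_l c _ _ Hg).
Qed.

Lemma mu_is_const k c : is_series (layer k (fun _ => c)) (c * INR b).
Proof.
  apply (is_series_ext _ _ _ (fun l => eq_sym (mu_layer_const k c l))).
  exact (is_series_scal_l c _ _ (mass_series k)).
Qed.

Lemma mu_ex_dominated k g h : (forall x, 0 <= x <= 1 -> Rabs (g x) <= h x) ->
  ex_series (layer k h) -> ex_series (layer k g).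
Proof.
  intros Hgh; apply (@ex_series_le R_AbsRing R_CompleteNormedModule).
  intros l; now apply mu_layer_abs_le.
Qed.

Lemma mu_ex_bounded k g C : (forall x, 0 <= x <= 1 -> Rabs (g x) <= C) -> ex_series (layer k g).
Proof.
  intros HC; apply (mu_ex_dominated k g (fun _ => C)); [exact HC|eexists; apply mu_is_const].
Qed.

Lemma mu_integral_abs_le k g h : (forall x, 0 <= x <= 1 -> Rabs (g x) <= h x) ->
  ex_series (layer k h) -> Rabs (mu_integral b d k g) <= mu_integral b d k h.
Proof.
  intros Hgh Hh; change (Rabs (Series (layer k g)) <= Series (layer k h)).
  assert (Habs : forall l, Rabs (layer k g l) <= layer k h l)
    by (intros; now apply mu_layer_abs_le).
  eapply Rle_trans; [apply Series_Rabs|apply Series_le; auto].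
  - apply (@ex_series_le R_AbsRing R_CompleteNormedModule _ (layer k h)); auto.
    intros l; change (Rabs (Rabs (layer k g l)) <= layer k h l); now rewrite Rabs_Rabsolu.
  - intros l; split; [apply Rabs_pos|auto].
Qed.

Lemma mu_is_rsum k (c : nat -> R) (h : nat -> R -> R) K :
  (forall m, ex_series (layer k (h m))) ->
  is_series (layer k (fun x => rsum K (fun m => c m * h m x)))
            (rsum K (fun m => c m * mu_integral b d k (h m))).
Proof.
  intros Hh; induction K as [|K IH].
  - replace (rsum 0 _) with (0 * INR b) by (unfold rsum; cbn; ring); apply mu_is_const.
  - apply (is_series_ext _ _ _ (fun l => mu_layer_ext k _ _ l (fun x => eq_sym (rsum_S K _)))).
    rewrite rsum_S; apply mu_is_plus; [exact IH|apply mu_is_scal, Series_correct, Hh].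
Qed.

Lemma u_mom_lim0 k : is_lim_seq (u_mom b d k) 0.
Proof.
  apply (is_lim_seq_Series_dominated (fun M => layer k (fun x => x ^ M)) (mass k)).
  - intros M l; split.
    + rewrite <- (Rmult_0_l (mass k l)), <- mu_layer_const; apply mu_layer_le.
      intros x Hx; now apply pow_unit_interval.
    + apply mu_layer_le; intros x Hx; now apply pow_unit_interval.
  - eexists; apply mass_series.
  - intros l; unfold mu_layer.
    replace (Finite 0) with (Finite (rsum (b ^ l) (fun _ => 0))) by now rewrite rsum_zero.
    apply is_lim_seq_rsum.
    intros x Hx; destruct (_ =? _)%nat; [|apply is_lim_seq_const].
    replace (Finite 0) with (Rbar_mult (/ INR (b ^ l)) 0) by (cbn; f_equal; ring).
    apply is_lim_seq_scal_l, is_lim_seq_geom.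
    pose proof (string_value_range l x Hx); rewrite Rabs_pos_eq; lra.
Qed.

Lemma mu_integral_termwise k (c : nat -> R) (h : nat -> R -> R) F (E : nat -> R -> R) :
  (forall m, ex_series (layer k (h m))) -> ex_series (layer k F) ->
  (forall K, ex_series (layer k (E K))) ->
  is_lim_seq (fun K => mu_integral b d k (E K)) 0 ->
  (forall K x, 0 <= x <= 1 -> Rabs (rsum K (fun m => c m * h m x) - F x) <= E K x) ->
  is_series (fun m => c m * mu_integral b d k (h m)) (mu_integral b d k F).
Proof.
  intros Hh HF HE HE0 Herr; apply is_series_rsum_partial.
  assert (Hdiff : forall K, Rabs (rsum K (fun m => c m * mu_integral b d k (h m))
                                  - mu_integral b d k F) <= mu_integral b d k (E K)).
  { intros K.
    assert (HD := mu_is_plus k _ _ _ _ (mu_is_rsum k c h K Hh)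
                    (mu_is_scal k (-1) F _ (Series_correct _ HF))).
    replace (_ - _) with (mu_integral b d k (fun x => rsum K (fun m => c m * h m x) + -1 * F x)).
    - apply mu_integral_abs_le; auto; intros x Hx.
      replace (_ + _) with (rsum K (fun m => c m * h m x) - F x) by ring; auto.
    - transitivity (rsum K (fun m => c m * mu_integral b d k (h m)) + -1 * mu_integral b d k F);
        [exact (is_series_unique _ _ HD)|ring]. }
  apply (is_lim_seq_le_le (fun K => mu_integral b d k F - mu_integral b d k (E K)) _
           (fun K => mu_integral b d k F + mu_integral b d k (E K))).
  - intros K; specialize (Hdiff K); apply Rabs_le_between in Hdiff; lra.
  - replace (Finite (mu_integral b d k F)) with (Rbar_minus (mu_integral b d k F) 0)
      by (cbn; f_equal; ring).
    apply is_lim_seq_minus'; [apply is_lim_seq_const|exact HE0].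
  - replace (Finite (mu_integral b d k F)) with (Rbar_plus (mu_integral b d k F) 0)
      by (cbn; f_equal; ring).
    apply is_lim_seq_plus'; [apply is_lim_seq_const|exact HE0].
Qed.

Lemma mu_ex_inv_shift k N : 1 <= N -> ex_series (layer k (fun x => / (N + x))).
Proof.
  intros HN; apply (mu_ex_bounded k _ 1); intros x Hx.
  rewrite Rabs_pos_eq;
    [rewrite <- Rinv_1; apply Rinv_le_contravar|left; apply Rinv_0_lt_compat]; lra.
Qed.

Lemma mu_is_inv_shift_sub k N c : 1 <= N ->
  is_series (layer k (fun x => / (N + x) - c)) (mu_integral b d k (fun x => / (N + x)) - c * INR b).
Proof.
  intros HN; replace (_ - c * INR b)
    with (mu_integral b d k (fun x => / (N + x)) + - c * INR b) by ring.
  apply mu_is_plus, mu_is_const; auto.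
  now apply Series_correct, mu_ex_inv_shift.
Qed.

Lemma mu_ex_pow k m : ex_series (layer k (fun x => x ^ m)).
Proof.
  apply (mu_ex_bounded k _ 1); intros x Hx.
  pose proof (pow_unit_interval x m Hx); rewrite Rabs_pos_eq; lra.
Qed.

(* 1/(N+x) = 1/N - x/N^2 + x^2/N^3 - ... *)
Lemma prefix_series_u k n : (1 <= n)%nat ->
  is_series (fun m => (-1) ^ S m * (u_mom b d k (S m) / INR n ^ (S m + 1)))
            (mu_integral b d k (fun x => / (INR n + x)) - INR b / INR n).
Proof.
  intros Hn; assert (HN : 1 <= INR n) by (apply (le_INR 1); auto); set (N := INR n) in *.
  replace (_ - INR b / N) with (mu_integral b d k (fun x => / (N + x) - / N)).
  2:{ apply is_series_unique; replace (INR b / N) with (/ N * INR b) by (unfold Rdiv; ring).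
      apply mu_is_inv_shift_sub; lra. }
  assert (Hterm : forall m, (-1) ^ S m / N ^ (S m + 1) * mu_integral b d k (fun x => x ^ S m)
                           = (-1) ^ S m * (u_mom b d k (S m) / N ^ (S m + 1)))
    by (intros m; unfold u_mom, Rdiv; ring).
  apply (is_series_ext _ _ _ Hterm).
  apply (mu_integral_termwise k _ _ _ (fun K x => x ^ S K)).
  - intros m; apply mu_ex_pow.
  - eexists; apply mu_is_inv_shift_sub; lra.
  - intros K; apply mu_ex_pow.
  - exact (proj1 (is_lim_seq_incr_1 _ _) (u_mom_lim0 k)).
  - intros K x Hx.
    rewrite (rsum_ext _ _ (fun m => (- x) ^ S m / N ^ (S m + 1)))
      by (intros m _; replace (- x) with (-1 * x) by ring; rewrite Rpow_mult_distr;
          unfold Rdiv; ring).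
    replace (N + x) with (N - - x) by ring.
    apply rsum_geom_err; try lra.
    unfold Rdiv; rewrite Rabs_mult, Rabs_Ropp, Rabs_inv, !Rabs_pos_eq by lra.
    assert (0 < / N <= 1)
      by (split; [apply Rinv_0_lt_compat|rewrite <- Rinv_1; apply Rinv_le_contravar]; lra).
    nra.
Qed.

(* 1/(N+x) = 1/(N+1) + (1-x)/(N+1)^2 + (1-x)^2/(N+1)^3 + ... *)
Lemma prefix_series_v k n : (1 <= n)%nat ->
  is_series (fun m => v_mom b d k (S m) / INR (n + 1) ^ (S m + 1))
            (mu_integral b d k (fun x => / (INR n + x)) - INR b / INR (n + 1)).
Proof.
  intros Hn; assert (HN : 1 <= INR n) by (apply (le_INR 1); auto).
  rewrite plus_INR; cbn [INR]; set (N := INR n) in *.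
  replace (_ - INR b / (N + 1)) with (mu_integral b d k (fun x => / (N + x) - / (N + 1))).
  2:{ apply is_series_unique; replace (INR b / (N + 1)) with (/ (N + 1) * INR b)
        by (unfold Rdiv; ring).
      apply mu_is_inv_shift_sub; lra. }
  assert (Hterm : forall m, / (N + 1) ^ (S m + 1) * mu_integral b d k (fun x => (1 - x) ^ S m)
                           = v_mom b d k (S m) / (N + 1) ^ (S m + 1))
    by (intros m; unfold v_mom, Rdiv; ring).
  apply (is_series_ext _ _ _ Hterm).
  apply (mu_integral_termwise k _ _ _ (fun K _ => (/ 2) ^ S K)).
  - intros m; apply (mu_ex_bounded k _ 1); intros x Hx.
    pose proof (pow_unit_interval (1 - x) (S m) ltac:(lra)); rewrite Rabs_pos_eq; lra.
  - eexists; apply mu_is_inv_shift_sub; lra.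
  - intros K; eexists; apply mu_is_const; auto.
  - apply (is_lim_seq_ext (fun K => (/ 2) ^ S K * INR b)).
    { intros K; symmetry; apply is_series_unique, mu_is_const; auto. }
    replace (Finite 0) with (Rbar_mult 0 (INR b)) by (cbn; f_equal; ring).
    apply is_lim_seq_scal_r, (is_lim_seq_incr_1 (fun K => (/ 2) ^ K)), is_lim_seq_geom.
    rewrite Rabs_pos_eq; lra.
  - intros K x Hx.
    rewrite (rsum_ext _ _ (fun m => (1 - x) ^ S m / (N + 1) ^ (S m + 1)))
      by (intros m _; unfold Rdiv; ring).
    replace (N + x) with (N + 1 - (1 - x)) by ring.
    apply rsum_geom_err; try lra.
    unfold Rdiv; rewrite Rabs_mult, Rabs_inv, !Rabs_pos_eq by lra.
    assert (0 < / (N + 1) <= / 2)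
      by (split; [apply Rinv_0_lt_compat|apply Rinv_le_contravar]; lra).
    nra.
Qed.

End Measures.

Lemma Hterm_nonneg b d k n : 0 <= Hterm b d k n.
Proof.
  unfold Hterm; destruct (1 <=? n)%nat eqn:E; cbn; [|lra].
  apply Nat.leb_le in E; destruct (_ =? _)%nat; [|lra].
  left; apply Rinv_0_lt_compat, lt_0_INR; lia.
Qed.

Definition block_integral (b d k N : nat) : R :=
  mu_integral b d (k - kdig b d N) (fun x => / (INR N + x)).

Section Blocks.

Variables b d k l : nat.
Hypothesis Hb : (2 <= b)%nat.

Local Notation in_block N := (andb (b ^ (l - 1) <=? N)%nat (kdig b d N <=? k)%nat).

Lemma block_sum_ext f g : (forall N, f N = g N) -> block_sum b d k l f = block_sum b d k l g.
Proof. intros Hfg; apply rsum_ext; intros; now rewrite Hfg. Qed.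

Lemma block_sum_plus f g :
  block_sum b d k l (fun N => f N + g N) = block_sum b d k l f + block_sum b d k l g.
Proof.
  unfold block_sum; rewrite <- rsum_plus; apply rsum_ext; intros N _; destruct (in_block N); ring.
Qed.

Lemma block_sum_scal c f : block_sum b d k l (fun N => c * f N) = c * block_sum b d k l f.
Proof.
  unfold block_sum; rewrite <- rsum_scal; apply rsum_ext; intros N _; destruct (in_block N); ring.
Qed.

Lemma is_series_block_sum (f : nat -> nat -> R) (L : nat -> R) :
  (forall N, (1 <= N)%nat -> is_series (fun m => f m N) (L N)) ->
  is_series (fun m => block_sum b d k l (f m)) (block_sum b d k l L).
Proof.
  intros Hf; apply is_series_rsum; intros N _.
  destruct (Nat.leb_spec (b ^ (l - 1)) N); cbn; [|apply is_series_zero].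
  destruct (kdig b d N <=? k)%nat; [apply Hf|apply is_series_zero].
  pose proof (Nat.pow_nonzero b (l - 1)); lia.
Qed.

(* Writing n = N b^J + X with N the block index and X a J-digit string,
   1/n = b^-J / (N + X/b^J). *)
Lemma block_term J N :
  rsum (b ^ J) (fun X => if (b ^ (l - 1 + J) <=? N * b ^ J + X)%nat
                         then Hterm b d k (N * b ^ J + X) else 0)
  = if in_block N then mu_layer b d (k - kdig b d N) (fun x => / (INR N + x)) J else 0.
Proof.
  assert (HJ : (0 < b ^ J)%nat) by (apply Nat.neq_0_lt_0, Nat.pow_nonzero; lia).
  rewrite Nat.pow_add_r.
  destruct (Nat.leb_spec (b ^ (l - 1)) N) as [HN|HN]; cbn [andb].
  - assert (HN1 : (1 <= N)%nat) by (pose proof (Nat.pow_nonzero b (l - 1)); lia).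
    assert (Hge : forall X, (b ^ (l - 1) * b ^ J <=? N * b ^ J + X)%nat = true)
      by (intros; apply Nat.leb_le; nia).
    destruct (Nat.leb_spec (kdig b d N) k) as [Hk|Hk].
    + apply rsum_ext; intros X HX; rewrite Hge; unfold Hterm.
      rewrite kdig_concat by (auto; lia).
      replace (1 <=? N * b ^ J + X)%nat with true by (symmetry; apply Nat.leb_le; nia); cbn [andb].
      destruct (Nat.eqb_spec (kdig b d N + cnt_len b d J X) k);
        destruct (Nat.eqb_spec (cnt_len b d J X) (k - kdig b d N)); try lia; [|reflexivity].
      rewrite plus_INR, mult_INR; pose proof (INR_pow_pos b Hb J); pose proof (pos_INR X).
      assert (1 <= INR N) by (apply (le_INR 1); auto).
      field; split; [lra|nra].
    + rewrite <- (rsum_zero (b ^ J)); apply rsum_ext; intros X HX; rewrite Hge; unfold Hterm.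
      rewrite kdig_concat by (auto; lia).
      destruct (Nat.eqb_spec (kdig b d N + cnt_len b d J X) k); [lia|].
      now rewrite Bool.andb_false_r.
  - transitivity (rsum (b ^ J) (fun _ => 0)); [apply rsum_ext; intros X HX|apply rsum_zero].
    replace (_ <=? _)%nat with false by (symmetry; apply Nat.leb_gt; nia); reflexivity.
Qed.

Hypothesis Hl : (1 <= l)%nat.

Lemma Hterm_partial_blocks J :
  rsum (b ^ (l - 1 + J)) (Hterm b d k) = low_part b d k l +
  rsum J (fun j => block_sum b d k l
                     (fun N => mu_layer b d (k - kdig b d N) (fun x => / (INR N + x)) j)).
Proof.
  induction J as [|J IH]; [now rewrite Nat.add_0_r, Rplus_0_r|].
  rewrite rsum_S, <- Rplus_assoc, <- IH, (rsum_split (b ^ (l - 1 + J)))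
    by (apply Nat.pow_le_mono_r; lia).
  apply Rplus_eq_compat_l.
  replace (l - 1 + S J)%nat with (l + J)%nat by lia.
  rewrite Nat.pow_add_r, rsum_mul; apply rsum_ext; intros N _; apply block_term.
Qed.

Hypothesis Hd : (d < b)%nat.

Lemma H_series :
  is_series (Hterm b d k) (low_part b d k l + block_sum b d k l (block_integral b d k)).
Proof.
  apply is_series_rsum_partial.
  apply (is_lim_seq_incr_subseq _ (fun J => b ^ (l - 1 + J))%nat).
  - intros n; rewrite rsum_S; pose proof (Hterm_nonneg b d k n); lra.
  - intros J; apply Nat.pow_lt_mono_r; lia.
  - apply (is_lim_seq_ext _ _ _ (fun J => eq_sym (Hterm_partial_blocks J))).
    apply is_lim_seq_plus'; [apply is_lim_seq_const|].
    apply is_series_rsum_partial, is_series_block_sum; intros N HN.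
    apply Series_correct, mu_ex_inv_shift; auto; apply (le_INR 1); auto.
Qed.

Lemma tail_u_series : is_series (fun m => tail_u b d k l (S m))
  (block_sum b d k l (fun N => block_integral b d k N - INR b / INR N)).
Proof.
  apply (is_series_ext _ _ _ (fun m => block_sum_scal ((-1) ^ S m)
    (fun N => u_mom b d (k - kdig b d N) (S m) / INR N ^ (S m + 1)))).
  apply (is_series_block_sum
    (fun m N => (-1) ^ S m * (u_mom b d (k - kdig b d N) (S m) / INR N ^ (S m + 1)))).
  intros N HN; now apply prefix_series_u.
Qed.

Lemma tail_v_series : is_series (fun m => tail_v b d k l (S m))
  (block_sum b d k l (fun N => block_integral b d k N - INR b / INR (N + 1))).
Proof.
  apply (is_series_block_sum
    (fun m N => v_mom b d (k - kdig b d N) (S m) / INR (N + 1) ^ (S m + 1))).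
  intros N HN; now apply prefix_series_v.
Qed.

End Blocks.

Theorem mainTheorem8 (b d k l : nat) :
  (2 <= b)%nat -> (d < b)%nat -> (1 <= l)%nat ->
  ex_series (Hterm b d k) /\
  (ex_series (fun m => tail_u b d k l (S m)) /\
   H b d k = low_part b d k l
             + INR b * block_sum b d k l (fun n => / INR n)
             + Series (fun m => tail_u b d k l (S m))) /\
  (ex_series (fun m => tail_v b d k l (S m)) /\
   H b d k = low_part b d k l
             + INR b * block_sum b d k l (fun n => / INR (n + 1))
             + Series (fun m => tail_v b d k l (S m))).
Proof.
  intros Hb Hd Hl.
  pose proof (H_series b d k l Hb Hl Hd) as HS.
  pose proof (tail_u_series b d k l Hb Hd) as TU.
  pose proof (tail_v_series b d k l Hb Hd) as TV.
  assert (HH : H b d k = low_part b d k l + block_sum b d k l (block_integral b d k))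
    by exact (is_series_unique _ _ HS).
  split; [eexists; exact HS|split; split].
  - eexists; exact TU.
  - rewrite (is_series_unique _ _ TU), HH, <- block_sum_scal, Rplus_assoc, <- block_sum_plus.
    f_equal; apply block_sum_ext; intros N; unfold Rdiv; ring.
  - eexists; exact TV.
  - rewrite (is_series_unique _ _ TV), HH, <- block_sum_scal, Rplus_assoc, <- block_sum_plus.
    f_equal; apply block_sum_ext; intros N; unfold Rdiv; ring.
Qed.
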